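(* Consider the partial-block protocol described in the context, on a finite set of agents $A$ with a connected undirected connectivity graph $G=(A,E)$ and block length $L$. If at some epoch $t$ a deadlock occurs, i.e. $D(i)$ holds for every $i\in A$, then all partial blocks have the same size: $|pb_i^{(t)}|=|pb_j^{(t)}|$ for all $i,j\in A$.
   Context: Let $A$ be a finite set of agents (agent IDs) and $G=(A,E)$ a connected undirected graph; $\Gamma_i$ denotes the set of neighbors of $i$. Fix an integer $L\ge 1$ (block length). Each agent $i$ maintains a partial block $pb_i\subseteq A$ (a set of agent IDs). The system runs in epochs $t=0,1,2,\dots$; $pb_i^{(t)}$ is agent $i$'s partial block at the start of epoch $t$. In each epoch: (C1) every agent $i$ with $i\notin pb_i$ adds $i$ to $pb_i$; (C2) every agent $i$ sends its $pb_i$ to every neighbor $j\in\Gamma_i$. When an agent $i$ receives a partial block $P$ (from a neighbor or via a direct message) it applies the rule: (R1) if $|P\setminus\{i\}|>|pb_i\setminus\{i\}|$, agent $i$ sets $pb_i:=P$; (R2) otherwise, if $|P\setminus\{i\}|=|pb_i\setminus\{i\}|$ and $P\neq pb_i$, agent $i$ sends its current $pb_i$ directly to every agent in $P\setminus pb_i$, each of which processes it by the same rule; (R3) otherwise the received block is discarded. All received partial blocks are assumed to pass all validity and similarity checks. For an agent $i$ and epoch $t$, the predicate $D(i)$ means: $pb_i^{(t)}=pb_i^{(t+1)}$ and $|pb_i^{(t)}|<L$. A deadlock at epoch $t$ means that $D(i)$ holds for all $i\in A$. *)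

From mathcomp Require Import all_boot.
From mathcomp Require Import ssreflect ssrbool ssrnat eqtype seq fintype finset finfun fingraph.
Set Implicit Arguments. Unset Strict Implicit. Unset Printing Implicit Defensive.

Section Protocol.
Variable A : finType.
Variable E : rel A.

Definition Gamma (i : A) : {set A} := [set j | E i j].

(* a message in transit: (recipient, partial block, is_neighbour_broadcast);
   the boolean is true for messages sent in step (C2), false for direct
   messages sent by rule (R2). *)
Definition msg := (A * {set A} * bool)%type.

Definition upd (pb : {ffun A -> {set A}}) (i : A) (v : {set A}) :
  {ffun A -> {set A}} := [ffun k => if k == i then v else pb k].

(* global state during an epoch: partial blocks, pending messages, and
   per-agent progress in the epoch (0: nothing done, 1: did C1, 2: did C2) *)
Record state := St { st_pb : {ffun A -> {set A}};
                     st_q : seq msg;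
                     st_ph : {ffun A -> nat} }.

Definition updn (ph : {ffun A -> nat}) (i : A) (n : nat) : {ffun A -> nat} :=
  [ffun k => if k == i then n else ph k].

(* processing of a received partial block P by agent i: rules R1, R2, R3.
   Returns the new partial-block map and the newly sent direct messages. *)
Definition receive (pb : {ffun A -> {set A}}) (i : A) (P : {set A}) :
  {ffun A -> {set A}} * seq msg :=
  if #|P :\ i| > #|pb i :\ i| then (upd pb i P, [::])
  else if (#|P :\ i| == #|pb i :\ i|) && (P != pb i) then
    (pb, [seq (k, pb i, false) | k <- enum (P :\: pb i)])
  else (pb, [::]).

Inductive step : state -> state -> Prop :=
| StepC1 (pb : {ffun A -> {set A}}) (q : seq msg) (ph : {ffun A -> nat}) (i : A) : ph i = 0 ->
    step (St pb q ph)
         (St (if i \notin pb i then upd pb i (i |: pb i) else pb) q (updn ph i 1))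
| StepC2 (pb : {ffun A -> {set A}}) (q : seq msg) (ph : {ffun A -> nat}) (i : A) : ph i = 1 ->
    step (St pb q ph)
         (St pb (q ++ [seq (j, pb i, true) | j <- enum (Gamma i)]) (updn ph i 2))
| StepRecv (pb : {ffun A -> {set A}}) (ph : {ffun A -> nat}) (q1 q2 : seq msg)
    (i : A) (P : {set A}) (b : bool) :
    step (St pb (q1 ++ (i, P, b) :: q2) ph)
         (St (receive pb i P).1 (q1 ++ q2 ++ (receive pb i P).2) ph).

Inductive steps : state -> state -> Prop :=
| StepsRefl s : steps s s
| StepsCons s1 s2 s3 : step s1 s2 -> steps s2 s3 -> steps s1 s3.

(* One epoch, taking partial blocks pb0 (start of epoch t) to pb1 (start of
   epoch t+1): an arbitrary interleaving in which every agent performs C1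
   then C2 exactly once, and message deliveries happen in arbitrary order;
   every block broadcast in C2 during the epoch is received within the epoch
   (no broadcast message is pending at the end).  Direct messages may be
   pending at the start (q0) or end (q1) of the epoch. *)
Definition epoch (pb0 : {ffun A -> {set A}}) (q0 : seq msg)
                 (pb1 : {ffun A -> {set A}}) (q1 : seq msg) : Prop :=
  steps (St pb0 q0 [ffun => 0]) (St pb1 q1 [ffun => 2]) /\
  all (fun m : msg => ~~ m.2) q1.

Definition D (L : nat) (pb0 pb1 : {ffun A -> {set A}}) (i : A) : Prop :=
  pb0 i = pb1 i /\ #|pb0 i| < L.

End Protocol.

From mathcomp Require Import all_boot.
Set Implicit Arguments. Unset Strict Implicit. Unset Printing Implicit Defensive.

(* Let c k := |pb0 k \ {k}|.  The quantity |pb k \ {k}| never decreases during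
   an epoch (only R1 changes a block, and only to a larger one), so when the
   epoch ends with pb1 = pb0 it equals c k in every intermediate state, and no
   R1 ever fires.  After agent i has broadcast in C2 to a neighbour j, either
   c i <= c j or a broadcast to j is pending whose block has at least c i
   elements other than j; delivering it without firing R1 forces c i <= c j.
   At the end of the epoch no broadcast is pending, so c is monotone along
   edges, hence constant by connectivity; and since every agent contains itself
   after C1, |pb0 k| = c k + 1. *)

Lemma cardsD1_le (T : finType) (S : {set T}) (i j : T) :
  i \in S -> #|S :\ i| <= #|S :\ j|.
Proof.
move=> Si; have := cardsD1 j S; rewrite (cardsD1 i S) Si add1n => h.
by rewrite -ltnS h; case: (j \in S).
Qed.

Lemma homo_connect (T : finType) (e : rel T) (f : T -> nat) :
  {homo f : x y / e x y >-> x <= y} -> {homo f : x y / connect e x y >-> x <= y}.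
Proof.
move=> f_e x y /connectP[p]; elim: p x => [|z p IHp] x /=; first by move=> _ ->.
by case/andP=> exz pz yz; apply: leq_trans (f_e _ _ exz) (IHp _ pz yz).
Qed.

Section Epoch.
Variables (A : finType) (E : rel A).

Lemma setU1D1 (i : A) (S : {set A}) : (i |: S) :\ i = S :\ i.
Proof. by apply/setP => x; rewrite !inE; case: eqP. Qed.

Lemma add_selfE (pb : {ffun A -> {set A}}) (i k : A) :
  (if i \notin pb i then upd pb i (i |: pb i) else pb) k =
  if k == i then i |: pb i else pb k.
Proof.
case: ifP => [_|/negbFE iS]; rewrite ?ffunE //.
by case: eqP => // ->; apply/esym/setUidPr; rewrite sub1set.
Qed.

Lemma receive_discard (pb : {ffun A -> {set A}}) (i : A) (P : {set A}) :
  #|P :\ i| <= #|pb i :\ i| -> (receive pb i P).1 = pb.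
Proof. by rewrite /receive leqNgt => /negbTE->; case: ifP. Qed.

Lemma receive_adopt (pb : {ffun A -> {set A}}) (i : A) (P : {set A}) :
  #|pb i :\ i| < #|P :\ i| -> (receive pb i P).1 = upd pb i P.
Proof. by rewrite /receive => ->. Qed.

Definition others (s : state A) (k : A) : nat := #|st_pb s k :\ k|.

Lemma step_others_mono s s' k : step E s s' -> others s k <= others s' k.
Proof.
case=> [pb q ph i _ | pb q ph i _ | pb ph q1 q2 i P b]; rewrite /others /=.
- by rewrite add_selfE; case: eqP => [->|]; rewrite ?setU1D1.
- by [].
- have [le_P|lt_P] := leqP #|P :\ i| #|pb i :\ i|; first by rewrite receive_discard.
  rewrite receive_adopt // ffunE; case: eqP => [->|//]; exact: ltnW.
Qed.

Lemma steps_others_mono s s' k : steps E s s' -> others s k <= others s' k.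
Proof.
by elim=> // s1 s2 s3 st12 _ le23; apply: leq_trans le23; apply: step_others_mono.
Qed.

Variable c : A -> nat.

Definition tight (s : state A) := forall k, others s k = c k.

Definition self_member (s : state A) :=
  forall k, 0 < st_ph s k -> k \in st_pb s k.

Definition edge_settled (s : state A) :=
  forall i j, E i j -> st_ph s i = 2 ->
  c i <= c j \/ exists2 P, (j, P, true) \in st_q s & c i <= #|P :\ j|.

Lemma steps_tight s1 s2 s3 :
  step E s1 s2 -> steps E s2 s3 -> tight s1 -> tight s3 -> tight s2.
Proof.
move=> st12 st23 t1 t3 k; apply/eqP; rewrite eqn_leq.
by rewrite -{1}(t3 k) steps_others_mono //= -(t1 k) (step_others_mono k st12).
Qed.

Lemma step_settled s s' : step E s s' -> tight s -> tight s' ->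
  self_member s -> edge_settled s -> self_member s' /\ edge_settled s'.
Proof.
case=> [pb q ph i ph_i | pb q ph i ph_i | pb ph q1 q2 i P b] t t' self settled.
- split=> [k|i' j e] /=; rewrite ffunE ?add_selfE.
    by case: eqP => [-> _|_ /self//]; rewrite setU11.
  by case: eqP => // _; apply: settled.
- split=> [k|i' j e] /=; rewrite ffunE.
    by case: eqP => [->|_ /self//]; rewrite self ?ph_i.
  case: eqP => [ii _|_ /(settled _ _ e)[|[P qP le_P]]]; [right|by left|right].
    subst i'; exists (pb i).
      by rewrite mem_cat; apply/orP; right; apply/mapP; exists j; rewrite ?mem_enum ?inE.
    by rewrite -(t i) /others cardsD1_le ?self ?ph_i.
  by exists P; rewrite // mem_cat qP.
- have le_P : #|P :\ i| <= #|pb i :\ i|.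
    rewrite leqNgt; apply/negP => lt_P; move: (t' i).
    by rewrite -(t i) /others /= receive_adopt // ffunE eqxx => eq_P; rewrite eq_P ltnn in lt_P.
  rewrite /= receive_discard //; split=> // i' j e /(settled _ _ e)[|[P0]]; first by left.
  rewrite /= !mem_cat in_cons => /or3P[qP|/eqP[-> -> _]|qP] le_P0.
  + by right; exists P0; rewrite // !mem_cat qP.
  + by left; rewrite -(t i); apply: leq_trans le_P0 le_P.
  + by right; exists P0; rewrite // !mem_cat qP orbT.
Qed.

Lemma steps_settled s s' : steps E s s' -> tight s -> tight s' ->
  self_member s -> edge_settled s -> self_member s' /\ edge_settled s'.
Proof.
elim=> // s1 s2 s3 st12 st23 IH t1 t3 self1 settled1.
have t2 := steps_tight st12 st23 t1 t3.
by have [] := step_settled st12 t1 t2 self1 settled1; apply: IH.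
Qed.

End Epoch.

Theorem lemma3 (A : finType) (E : rel A) (L : nat)
    (pb0 pb1 : {ffun A -> {set A}}) (q0 q1 : seq (msg A)) :
  symmetric E -> irreflexive E -> (forall i j : A, connect E i j) ->
  0 < L ->
  epoch E pb0 q0 pb1 q1 ->
  (forall i : A, D L pb0 pb1 i) ->
  forall i j : A, #|pb0 i| = #|pb0 j|.
Proof.
move=> _ _ conn _ [run no_broadcast] deadlock.
pose c k := #|pb0 k :\ k|.
have pb1E k : pb1 k = pb0 k by case: (deadlock k).
have [self settled] : self_member (St pb1 q1 [ffun => 2]) /\
                      edge_settled E c (St pb1 q1 [ffun => 2]).
  by apply: (steps_settled run) => [k|k|k|i j _]; rewrite /others /= ?ffunE ?pb1E.
have c_edge : {homo c : x y / E x y >-> x <= y}.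
  move=> i j e; case: (settled i j e) => [||[P qP _]]; rewrite ?ffunE //.
  by move/allP: no_broadcast => /(_ _ qP).
have size_pb0 k : #|pb0 k| = (c k).+1.
  have k_in : k \in pb0 k by rewrite -pb1E self ?ffunE.
  by rewrite (cardsD1 k) k_in.
move=> i j; rewrite !size_pb0; congr _.+1; apply/eqP.
by rewrite eqn_leq !(homo_connect c_edge).
Qed.
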